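(* There exist 4-GDDs of types $20^9 11^1$, $20^9 17^1$ and $20^9 23^1$.
   Context: For a set $K$ of positive integers, a $K$-GDD (group divisible design) is a triple $(V,\mathcal G,\mathcal B)$ where $V$ is a finite set, $\mathcal G$ is a partition of $V$ into subsets called groups, $\mathcal B$ is a nonempty collection of subsets of $V$ (blocks) with sizes in $K$, such that every pair of points from distinct groups lies in exactly one block and no pair of points from the same group lies in any block. A $k$-GDD means a $\{k\}$-GDD. Type $g^u m^1$ means $u$ groups of size $g$ and one group of size $m$. *)

From mathcomp Require Import all_boot.
Set Implicit Arguments. Unset Strict Implicit. Unset Printing Implicit Defensive.

Definition is_GDD (K : pred nat) (T : finType)
    (G : {set {set T}}) (B : {set {set T}}) : Prop :=
  [/\ partition G [set: T],
      B != set0,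
      (forall b, b \in B -> K #|b|),
      (forall x y : T, x != y -> pblock G x = pblock G y ->
         forall b, b \in B -> ~ ((x \in b) && (y \in b)))
    & (forall x y : T, pblock G x != pblock G y ->
         #|[set b in B | (x \in b) && (y \in b)]| = 1)].

Definition is_kGDD (k : nat) (T : finType) G B := @is_GDD (pred1 k) T G B.

Definition has_type_gu_m1 (T : finType) (G : {set {set T}}) (g u m : nat) : Prop :=
  exists2 G0, G0 \in G &
    [/\ #|G0| = m, #|G :\ G0| = u & forall A, A \in G :\ G0 -> #|A| = g].

Definition exists_kGDD_type (k g u m : nat) : Prop :=
  exists (T : finType) (G B : {set {set T}}),
    is_kGDD k G B /\ has_type_gu_m1 G g u m.

From mathcomp Require Import all_boot.
Set Implicit Arguments. Unset Strict Implicit. Unset Printing Implicit Defensive.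

(* Each design lives on Z_180 together with m points at infinity.  The groups
   are the nine residue classes mod 9 of Z_180 (of size 20) and the set of
   points at infinity; the blocks are the orbits of a few base blocks under the
   translation x |-> x + 4 of Z_180, which has order 45 and fixes or 3-cycles
   the points at infinity.  The GDD axioms then amount to a finite check: for
   every point x, the points sharing a block with x, counted with multiplicity,
   are exactly the points outside the group of x. *)

Lemma card_partition_uniform_D1 (T : finType) (G : {set {set T}}) (G0 : {set T}) g :
  partition G [set: T] -> G0 \in G -> (forall A, A \in G :\ G0 -> #|A| = g) ->
  #|T| = #|G :\ G0| * g + #|G0|.
Proof.
move=> partG G0G cardG.
rewrite -cardsT (card_partition partG) (bigD1 G0) //= addnC.
rewrite (eq_bigr (fun=> g)) => [|A /andP[AG AG0]]; last first.
  by rewrite cardG // !inE AG AG0.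
rewrite sum_nat_const; congr (_ * _ + _).
by apply: eq_card => A; rewrite !inE andbC.
Qed.

Lemma has_type_of_partition (T : finType) (G : {set {set T}}) (G0 : {set T}) g u :
  partition G [set: T] -> G0 \in G -> 0 < g ->
  (forall A, A \in G :\ G0 -> #|A| = g) ->
  #|T| = u * g + #|G0| -> has_type_gu_m1 G g u #|G0|.
Proof.
move=> partG G0G g_gt0 cardG cardT; exists G0 => //; split=> //.
apply/eqP; rewrite -(eqn_pmul2r g_gt0) -(eqn_add2r #|G0|) -cardT.
by rewrite -(card_partition_uniform_D1 partG).
Qed.

Section CoBlockCertificate.

Variables (n k : nat) (grp : nat -> nat) (L : seq (seq nat)).

Definition co_block x (b : seq nat) :=
  if x \in b then filter (predC1 x) b else [::].
Definition co_blocks x := flatten [seq co_block x b | b <- L].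
Definition other_groups x := [seq y <- iota 0 n | grp y != grp x].
Definition blocks_through x y := [seq b <- L | (x \in b) && (y \in b)].

Definition kGDD_certificate :=
  [&& L != [::],
      all (fun b => [&& uniq b, size b == k & all (gtn n) b]) L
    & all (fun x => sort leq (co_blocks x) == other_groups x) (iota 0 n)].

Hypothesis cert : kGDD_certificate.

Lemma count_co_block x y b :
  uniq b -> y != x -> count_mem y (co_block x b) = (x \in b) && (y \in b).
Proof.
move=> b_uniq yx; rewrite /co_block; case: (x \in b) => //=.
by rewrite count_uniq_mem ?filter_uniq // mem_filter /= yx.
Qed.

Lemma count_co_blocks x y :
  y != x -> count_mem y (co_blocks x) = size (blocks_through x y).
Proof.
have /and3P[_ /allP blocksP _] := cert.
move=> yx; rewrite count_flatten size_filter -sumn_count -map_comp.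
congr sumn; apply/eq_in_map => b /blocksP /and3P[b_uniq _ _] /=.
exact: count_co_block.
Qed.

Lemma size_blocks_through x y :
  x < n -> y < n -> y != x -> size (blocks_through x y) = (grp x != grp y).
Proof.
have /and3P[_ _ /allP coP] := cert.
move=> xn yn yx; rewrite -count_co_blocks // -(count_sort leq).
rewrite (eqP (coP x _)) ?mem_iota // count_uniq_mem ?filter_uniq ?iota_uniq //.
by rewrite mem_filter mem_iota yn eq_sym /= andbT.
Qed.

Definition ord_set (b : seq nat) : {set 'I_n} := [set x | val x \in b].
Definition gdd_groups := preim_partition (fun x : 'I_n => grp x) [set: 'I_n].
Definition gdd_blocks := [set:: [seq ord_set b | b <- L]].

Lemma card_ord_pred (P : pred nat) :
  #|[set x : 'I_n | P (val x)]| = count P (iota 0 n).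
Proof.
rewrite cardsE cardE /enum_mem size_filter -enumT -val_enum_ord count_map.
exact: eq_count.
Qed.

Lemma card_ord_set b : uniq b -> all (gtn n) b -> #|ord_set b| = size b.
Proof.
move=> b_uniq /allP b_lt; rewrite card_ord_pred -size_filter.
apply/perm_size/uniq_perm; rewrite ?filter_uniq ?iota_uniq // => y.
by rewrite mem_filter mem_iota andb_idr // => /b_lt.
Qed.

Lemma gdd_groups_partition : partition gdd_groups [set: 'I_n].
Proof. exact: preim_partitionP. Qed.

Lemma mem_pblock_gdd_groups (x y : 'I_n) :
  (y \in pblock gdd_groups x) = (grp x == grp y).
Proof.
by rewrite pblock_equivalence_partition // => ? ? ? _ _ _; split=> // /eqP->.
Qed.

Lemma eq_pblock_gdd_groups (x y : 'I_n) :
  (pblock gdd_groups x == pblock gdd_groups y) = (grp x == grp y).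
Proof.
have /and3P[/eqP coverG trivG _] := gdd_groups_partition.
by rewrite eq_pblock ?coverG ?inE // mem_pblock_gdd_groups.
Qed.

Lemma gdd_blocksP S :
  reflect (exists2 b, b \in L & S = ord_set b) (S \in gdd_blocks).
Proof. by rewrite inE; apply: (iffP mapP). Qed.

Lemma ord_blocks_through (x y : 'I_n) b :
  b \in L -> (x \in ord_set b) && (y \in ord_set b) -> b \in blocks_through x y.
Proof. by move=> bL; rewrite !inE mem_filter bL andbT. Qed.

Lemma card_gdd_blocks_through (x y : 'I_n) b0 :
  blocks_through x y = [:: b0] ->
  #|[set S in gdd_blocks | (x \in S) && (y \in S)]| = 1.
Proof.
move=> through_xy.
have /andP[/andP[xb0 yb0] b0L] :
    ((x : nat) \in b0) && ((y : nat) \in b0) && (b0 \in L).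
  by have := mem_head b0 [::]; rewrite -through_xy mem_filter.
rewrite (_ : [set S in gdd_blocks | _ & _] = [set ord_set b0]) ?cards1 //.
apply/setP=> S; rewrite in_set in_set1.
apply/andP/eqP => [[/gdd_blocksP[b bL ->] /(ord_blocks_through bL)] | ->].
  by rewrite through_xy inE => /eqP ->.
by split; [apply/gdd_blocksP; exists b0 | rewrite !inE xb0 yb0].
Qed.

Lemma is_kGDD_of_certificate : is_kGDD k gdd_groups gdd_blocks.
Proof.
have /and3P[L_nil /allP blocksP _] := cert.
have through_size (x y : 'I_n) : x != y ->
    size (blocks_through x y) = (pblock gdd_groups x != pblock gdd_groups y).
  by move=> xy; rewrite eq_pblock_gdd_groups size_blocks_through // eq_sym.
split.
- exact: gdd_groups_partition.
- have [b bL] : exists b, b \in L.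
    by move: L_nil; case: (L) => // b ? _; exists b; rewrite mem_head.
  by apply/set0Pn; exists (ord_set b); apply/gdd_blocksP; exists b.
- move=> _ /gdd_blocksP[b /blocksP /and3P[b_uniq /eqP <- b_lt] ->].
  by rewrite /= card_ord_set.
- move=> x y xy /eqP same_xy _ /gdd_blocksP[b bL ->].
  move/(ord_blocks_through bL).
  by have := through_size x y xy; rewrite same_xy; case: blocks_through.
move=> x y diff_xy; have xy : x != y by apply: contraNneq diff_xy => ->.
have := through_size x y xy; rewrite diff_xy.
case through_xy : (blocks_through x y) => [|b0 [|//]] // _.
exact: card_gdd_blocks_through through_xy.
Qed.

Definition group_size x := count (fun y => grp y == grp x) (iota 0 n).

Lemma card_pblock_gdd_groups (x : 'I_n) : #|pblock gdd_groups x| = group_size x.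
Proof.
rewrite /group_size -card_ord_pred; apply: eq_card => y.
by rewrite mem_pblock_gdd_groups inE eq_sym.
Qed.

Lemma exists_kGDD_type_of_certificate x0 g u :
  x0 < n -> 0 < g ->
  all (fun x => (grp x == grp x0) || (group_size x == g)) (iota 0 n) ->
  n = u * g + group_size x0 ->
  exists_kGDD_type k g u (group_size x0).
Proof.
move=> x0_lt g_gt0 /allP sizesP card_n; pose o0 := Ordinal x0_lt.
have /and3P[/eqP coverG trivG G_no0] := gdd_groups_partition.
exists 'I_n, gdd_groups, gdd_blocks; split; first exact: is_kGDD_of_certificate.
rewrite -[group_size x0]/(group_size o0) -card_pblock_gdd_groups.
apply: has_type_of_partition gdd_groups_partition _ g_gt0 _ _.
- by rewrite pblock_mem ?coverG.
- move=> A /setD1P[A_o0 AG]; have /set0Pn[x xA] : A != set0.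
    by apply: contraNneq G_no0 => <-.
  rewrite -(def_pblock trivG AG xA) card_pblock_gdd_groups.
  have /orP[same_x0|/eqP //] : (grp x == grp x0) || (group_size x == g).
    by apply: sizesP; rewrite mem_iota ltn_ord.
  by move: A_o0; rewrite -(def_pblock trivG AG xA) eq_pblock_gdd_groups same_x0.
- by rewrite card_ord card_pblock_gdd_groups.
Qed.

End CoBlockCertificate.

Definition group x := if x < 180 then x %% 9 else 9.

Lemma group_fin x : x < 180 -> group x = x %% 9.
Proof. by rewrite /group => ->. Qed.

Lemma group_inf x : 180 <= x -> group x = 9.
Proof. by move=> x_ge; rewrite /group ltnNge x_ge. Qed.

Lemma count_residue r : r < 9 -> count (fun y => y %% 9 == r) (iota 0 180) = 20.
Proof. by do 9?[case: r => [|r]]. Qed.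

Lemma group_size_inf m : group_size (180 + m) group 180 = m.
Proof.
rewrite /group_size iotaD count_cat add0n group_inf //.
rewrite (eq_in_count (a2 := pred0)) => [|y]; last first.
  by rewrite mem_iota => /andP[_ /group_fin ->]; rewrite ltn_eqF ?ltn_pmod.
rewrite count_pred0 (eq_in_count (a2 := predT)) ?count_predT ?size_iota // => y.
by rewrite mem_iota => /andP[/group_inf -> _].
Qed.

Lemma group_size_fin m x : x < 180 -> group_size (180 + m) group x = 20.
Proof.
move=> x_lt; rewrite /group_size iotaD count_cat add0n group_fin //.
rewrite (eq_in_count (a2 := pred0) (s := iota 180 m)) => [|y]; last first.
  by rewrite mem_iota => /andP[/group_inf -> _]; rewrite gtn_eqF ?ltn_pmod.
rewrite count_pred0 addn0 -[RHS](@count_residue (x %% 9)); last exact: ltn_pmod.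
by apply: eq_in_count => y; rewrite mem_iota => /andP[_ /group_fin ->].
Qed.

Lemma exists_4GDD_type_20_9_of_certificate (m : nat) (L : seq (seq nat)) :
  kGDD_certificate (180 + m) 4 group L -> 0 < m -> exists_kGDD_type 4 20 9 m.
Proof.
move=> cert m_gt0; rewrite -(group_size_inf m).
apply: (exists_kGDD_type_of_certificate cert).
- by rewrite -[ltnLHS]addn0 ltn_add2l.
- by [].
- apply/allP => x _; have [x_lt | x_ge] := ltnP x 180.
    by rewrite group_size_fin ?eqxx ?orbT.
  by rewrite !group_inf.
- by rewrite group_size_inf.
Qed.

(* Base blocks on Z_180 and the points at infinity [inf i].  [Short i x] is
   {inf i, x, x + 60, x + 120}, which is invariant under x |-> x + 60, so its
   orbit has 15 blocks. *)
Inductive base_block :=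
  | Orbit of seq nat
  | Fixed of nat & seq nat
  | Short of nat & nat
  | Cycled of nat & seq nat.

Definition inf i := 180 + i.
Definition shift t x := (x + 4 * t) %% 180.

Definition develop (B : base_block) : seq (seq nat) :=
  match B with
  | Orbit b => [seq map (shift t) b | t <- iota 0 45]
  | Fixed i b => [seq inf i :: map (shift t) b | t <- iota 0 45]
  | Short i x =>
      [seq inf i :: [seq shift t (x + 60 * s) | s <- iota 0 3] | t <- iota 0 15]
  | Cycled i b => [seq inf (2 + 3 * i + t %% 3) :: map (shift t) b | t <- iota 0 45]
  end.

Definition design (Bs : seq base_block) : seq (seq nat) := flatten (map develop Bs).

Definition base_blocks11 : seq base_block :=
  [:: Orbit [:: 0; 15; 124; 175]; Orbit [:: 0; 35; 73; 158];
      Orbit [:: 12; 40; 155; 114]; Orbit [:: 88; 113; 44; 165];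
      Orbit [:: 1; 33; 94; 133]; Orbit [:: 0; 107; 109; 146];
      Orbit [:: 80; 104; 103; 34]; Orbit [:: 1; 27; 43; 122];
      Orbit [:: 0; 21; 65; 161]; Orbit [:: 1; 50; 147; 155];
      Orbit [:: 2; 19; 51; 70]; Orbit [:: 0; 59; 87; 127];
      Orbit [:: 0; 97; 105; 125]; Orbit [:: 1; 75; 99; 166];
      Orbit [:: 0; 52; 113; 166]; Orbit [:: 1; 14; 17; 146];
      Orbit [:: 0; 47; 133; 157]; Orbit [:: 69; 142; 119; 134];
      Orbit [:: 0; 30; 92; 154]; Orbit [:: 0; 2; 14; 130];
      Orbit [:: 0; 70; 91; 147]; Orbit [:: 0; 31; 48; 177];
      Orbit [:: 0; 22; 33; 101]; Orbit [:: 0; 43; 50; 150];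
      Orbit [:: 101; 59; 106; 116]; Orbit [:: 0; 6; 82; 98];
      Orbit [:: 43; 127; 113; 170]; Orbit [:: 0; 1; 8; 12];
      Orbit [:: 0; 17; 79; 104]; Orbit [:: 0; 75; 137; 167];
      Orbit [:: 0; 13; 122; 164]; Orbit [:: 0; 46; 66; 89];
      Orbit [:: 0; 26; 58; 64]; Orbit [:: 1; 114; 174; 175];
      Orbit [:: 0; 41; 53; 145]; Orbit [:: 0; 3; 34; 67];
      Orbit [:: 1; 115; 126; 150]; Orbit [:: 0; 19; 68; 106];
      Orbit [:: 155; 51; 149; 145]; Orbit [:: 0; 11; 55; 96];
      Orbit [:: 0; 49; 78; 80]; Orbit [:: 164; 125; 103; 23];
      Orbit [:: 2; 15; 27; 86]; Orbit [:: 1; 3; 131; 135];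
      Orbit [:: 1; 18; 47; 121]; Orbit [:: 1; 65; 134; 162]; Short 0 139;
      Fixed 0 [:: 81; 176; 82]; Short 1 36; Fixed 1 [:: 62; 67; 29];
      Cycled 0 [:: 103; 1; 124]; Cycled 0 [:: 21; 77; 143];
      Cycled 0 [:: 98; 54; 94]; Cycled 0 [:: 156; 87; 116];
      Cycled 1 [:: 104; 124; 27]; Cycled 1 [:: 93; 114; 151];
      Cycled 1 [:: 48; 53; 142]; Cycled 1 [:: 49; 74; 71];
      Cycled 2 [:: 59; 69; 174]; Cycled 2 [:: 51; 106; 65];
      Cycled 2 [:: 92; 124; 134]; Cycled 2 [:: 72; 79; 109]].

Definition base_blocks17 : seq base_block :=
  [:: Orbit [:: 2; 14; 55; 151]; Orbit [:: 61; 11; 0; 102];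
      Orbit [:: 0; 34; 131; 138]; Orbit [:: 0; 70; 71; 83];
      Orbit [:: 0; 25; 173; 175]; Orbit [:: 56; 64; 121; 24];
      Orbit [:: 0; 15; 119; 163]; Orbit [:: 0; 38; 82; 113];
      Orbit [:: 0; 1; 39; 168]; Orbit [:: 0; 19; 98; 156];
      Orbit [:: 1; 49; 146; 162]; Orbit [:: 45; 71; 178; 46];
      Orbit [:: 174; 110; 113; 153]; Orbit [:: 0; 86; 94; 115];
      Orbit [:: 0; 77; 123; 127]; Orbit [:: 0; 21; 96; 125];
      Orbit [:: 0; 3; 50; 155]; Orbit [:: 1; 13; 35; 167];
      Orbit [:: 1; 9; 123; 143]; Orbit [:: 1; 59; 99; 121];
      Orbit [:: 0; 58; 142; 165]; Orbit [:: 0; 5; 30; 92];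
      Orbit [:: 1; 30; 45; 139]; Orbit [:: 0; 6; 16; 80];
      Orbit [:: 0; 49; 150; 161]; Orbit [:: 0; 35; 109; 133];
      Orbit [:: 0; 10; 79; 166]; Orbit [:: 84; 117; 14; 137];
      Orbit [:: 2; 7; 67; 131]; Orbit [:: 1; 54; 87; 122];
      Orbit [:: 0; 31; 55; 169]; Orbit [:: 0; 37; 101; 132];
      Orbit [:: 1; 5; 57; 85]; Orbit [:: 0; 44; 139; 178];
      Orbit [:: 0; 7; 75; 76]; Orbit [:: 7; 74; 41; 130];
      Orbit [:: 0; 130; 147; 158]; Orbit [:: 0; 26; 66; 103];
      Orbit [:: 120; 31; 86; 8]; Orbit [:: 0; 14; 152; 174];
      Orbit [:: 0; 129; 143; 145]; Orbit [:: 1; 111; 126; 130]; Short 0 16;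
      Fixed 0 [:: 130; 107; 37]; Short 1 142; Fixed 1 [:: 19; 48; 9];
      Cycled 0 [:: 127; 66; 53]; Cycled 0 [:: 98; 61; 130];
      Cycled 0 [:: 165; 47; 63]; Cycled 0 [:: 132; 128; 4];
      Cycled 1 [:: 56; 35; 163]; Cycled 1 [:: 149; 108; 154];
      Cycled 1 [:: 177; 99; 40]; Cycled 1 [:: 114; 26; 97];
      Cycled 2 [:: 148; 30; 125]; Cycled 2 [:: 115; 121; 48];
      Cycled 2 [:: 129; 135; 14]; Cycled 2 [:: 154; 152; 59];
      Cycled 3 [:: 79; 167; 87]; Cycled 3 [:: 37; 128; 148];
      Cycled 3 [:: 144; 118; 38]; Cycled 3 [:: 105; 66; 17];
      Cycled 4 [:: 2; 179; 130]; Cycled 4 [:: 87; 57; 40];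
      Cycled 4 [:: 120; 61; 54]; Cycled 4 [:: 116; 103; 113]].

Definition base_blocks23 : seq base_block :=
  [:: Orbit [:: 39; 137; 159; 28]; Orbit [:: 2; 14; 123; 134];
      Orbit [:: 2; 3; 22; 59]; Orbit [:: 0; 23; 124; 154];
      Orbit [:: 0; 53; 74; 177]; Orbit [:: 0; 41; 71; 178];
      Orbit [:: 0; 8; 118; 133]; Orbit [:: 173; 13; 79; 141];
      Orbit [:: 0; 12; 28; 77]; Orbit [:: 1; 27; 49; 179];
      Orbit [:: 2; 23; 30; 63]; Orbit [:: 0; 111; 121; 159];
      Orbit [:: 0; 29; 73; 113]; Orbit [:: 0; 70; 123; 167];
      Orbit [:: 0; 86; 105; 142]; Orbit [:: 0; 10; 69; 148];
      Orbit [:: 0; 4; 165; 179]; Orbit [:: 1; 6; 98; 153];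
      Orbit [:: 115; 21; 31; 176]; Orbit [:: 1; 17; 81; 130];
      Orbit [:: 2; 67; 79; 179]; Orbit [:: 0; 59; 83; 106];
      Orbit [:: 24; 122; 156; 139]; Orbit [:: 0; 20; 66; 95];
      Orbit [:: 0; 127; 141; 170]; Orbit [:: 2; 10; 42; 106];
      Orbit [:: 78; 34; 119; 149]; Orbit [:: 0; 1; 58; 158];
      Orbit [:: 0; 5; 39; 173]; Orbit [:: 0; 43; 51; 84];
      Orbit [:: 0; 26; 50; 61]; Orbit [:: 0; 37; 62; 149];
      Orbit [:: 1; 14; 89; 178]; Orbit [:: 0; 7; 44; 174];
      Orbit [:: 0; 24; 102; 116]; Orbit [:: 35; 64; 41; 111];
      Orbit [:: 1; 25; 75; 139]; Orbit [:: 0; 67; 93; 155]; Short 0 124;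
      Fixed 0 [:: 15; 10; 137]; Short 1 165; Fixed 1 [:: 0; 55; 134];
      Cycled 0 [:: 60; 142; 172]; Cycled 0 [:: 175; 29; 133];
      Cycled 0 [:: 98; 140; 105]; Cycled 0 [:: 111; 126; 59];
      Cycled 1 [:: 153; 157; 46]; Cycled 1 [:: 113; 75; 56];
      Cycled 1 [:: 148; 59; 170]; Cycled 1 [:: 102; 96; 127];
      Cycled 2 [:: 105; 23; 58]; Cycled 2 [:: 134; 20; 96];
      Cycled 2 [:: 102; 88; 101]; Cycled 2 [:: 175; 73; 15];
      Cycled 3 [:: 165; 28; 80]; Cycled 3 [:: 48; 135; 151];
      Cycled 3 [:: 126; 71; 122]; Cycled 3 [:: 133; 125; 94];
      Cycled 4 [:: 176; 118; 17]; Cycled 4 [:: 112; 21; 127];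
      Cycled 4 [:: 170; 95; 168]; Cycled 4 [:: 85; 39; 126];
      Cycled 5 [:: 11; 8; 42]; Cycled 5 [:: 166; 98; 81];
      Cycled 5 [:: 120; 137; 40]; Cycled 5 [:: 157; 163; 159];
      Cycled 6 [:: 68; 17; 28]; Cycled 6 [:: 81; 142; 48];
      Cycled 6 [:: 11; 50; 102]; Cycled 6 [:: 25; 135; 103]].


Lemma certificate11 : kGDD_certificate (180 + 11) 4 group (design base_blocks11).
Proof. by vm_compute. Qed.

Lemma certificate17 : kGDD_certificate (180 + 17) 4 group (design base_blocks17).
Proof. by vm_compute. Qed.

Lemma certificate23 : kGDD_certificate (180 + 23) 4 group (design base_blocks23).
Proof. by vm_compute. Qed.

Theorem lemma2p3 :
  [/\ exists_kGDD_type 4 20 9 11,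
      exists_kGDD_type 4 20 9 17
    & exists_kGDD_type 4 20 9 23].
Proof.
split.
- exact: exists_4GDD_type_20_9_of_certificate certificate11 isT.
- exact: exists_4GDD_type_20_9_of_certificate certificate17 isT.
- exact: exists_4GDD_type_20_9_of_certificate certificate23 isT.
Qed.
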